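(* Let $x,y$ be sequences, $n=|x|+|y|\ge 2$, and let $0<t\le 1/4$. Let $L$ be a longest common subsequence of $x$ and $y$ with $|L|=n^{3/4+t}$. Let $f$ be a power of $2$ with $1\le f<n^{1/4}$ such that $L'=\mathsf{Project}(L,\Sigma_{[f..2f)}(L))$ satisfies $|L'|\ge |L|/(2\log_2 n)$. Let $x'=\mathsf{Project}(x,\Sigma_{[f..n]}(x))$, and let $\pi$ be a repetition-free sequence whose set of symbols is exactly the set of symbols occurring in $x'$. Let $R$ be a subsequence of $L'$ containing exactly one occurrence of each symbol occurring in $L'$, and assume $|\mathsf{LIS}_\pi(R)|<n^t/\log_2 n$. Consider any run of the peeling process on $x'$: $x^0=x'$, and while $x^i$ is nonempty, $\pi^i$ is any subsequence of $x^i$ that is strictly decreasing with respect to $<_\pi$ with $|\pi^i|\ge|\mathsf{LDS}_\pi(x^i)|/2$, and $x^{i+1}=\mathsf{Exclude}(x^i,\pi^i)$. Then there is an iteration $i$ of this process with $|\mathsf{LIS}_{\pi^i}(y)|\ge n^t/200$.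
   Context: For a symbol $\sigma$, $\#_\sigma(x)$ is the number of occurrences of $\sigma$ in $x$; $\Sigma_{[a..b]}(x)=\{\sigma : a\le\#_\sigma(x)\le b\}$ and $\Sigma_{[a..b)}(x)=\{\sigma : a\le\#_\sigma(x)<b\}$. For a set $S$ of symbols (or a sequence, standing for its set of symbols), $\mathsf{Project}(x,S)$ is the subsequence of $x$ of entries whose symbol is in $S$, and $\mathsf{Exclude}(x,S)$ the subsequence of entries whose symbol is not in $S$. A sequence is repetition-free if its entries are pairwise distinct; a repetition-free $\pi=\pi_1\dots\pi_k$ defines the strict total order $\pi_i<_\pi\pi_j$ iff $i<j$. For any sequence $x$, $\mathsf{LIS}_\pi(x)$ (resp. $\mathsf{LDS}_\pi(x)$) is a longest subsequence of $\mathsf{Project}(x,\pi)$ that is strictly increasing (resp. strictly decreasing) with respect to $<_\pi$. *)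

From mathcomp Require Import all_boot.
From Stdlib Require Import Reals.
Set Implicit Arguments. Unset Strict Implicit. Unset Printing Implicit Defensive.

Section Defs.
Variable T : eqType.

Definition sigma_cc (a b : nat) (x : seq T) : pred T :=
  fun s => (a <= count_mem s x <= b)%N.
Definition sigma_co (a b : nat) (x : seq T) : pred T :=
  fun s => (a <= count_mem s x < b)%N.

Definition Project (x : seq T) (S : pred T) : seq T := filter S x.
Definition Exclude (x : seq T) (S : pred T) : seq T := filter (predC S) x.

Definition lt_pi (pi : seq T) : rel T :=
  fun a b => [&& a \in pi, b \in pi & (index a pi < index b pi)%N].

Definition lis_len (pi x : seq T) : nat :=
  let s := Project x (mem pi) in
  \max_(m : (size s).-tuple bool | sorted (lt_pi pi) (mask m s)) size (mask m s).

Definition lds_len (pi x : seq T) : nat :=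
  let s := Project x (mem pi) in
  \max_(m : (size s).-tuple bool | sorted (fun a b => lt_pi pi b a) (mask m s))
     size (mask m s).

Definition is_lcs (L x y : seq T) : Prop :=
  [/\ subseq L x, subseq L y &
      forall L', subseq L' x -> subseq L' y -> (size L' <= size L)%N].

(* A complete run of the peeling process, starting from xi, whose chosen
   sequences are pis = [:: pi^i; pi^{i+1}; ...]; it stops exactly when the
   current sequence becomes empty. *)
Fixpoint peel_run (pi xi : seq T) (pis : seq (seq T)) : Prop :=
  match pis with
  | [::] => xi = [::]
  | p :: pis' =>
      [/\ xi <> [::], subseq p xi,
          sorted (fun a b => lt_pi pi b a) p,
          (lds_len pi xi <= 2 * size p)%N &
          peel_run pi (Exclude xi (mem p)) pis']
  end.
End Defs.

Definition log2R (r : R) : R := (ln r / ln 2)%R.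

(* Let R0 list the distinct symbols of L' and l = |LIS_pi(R0)|, and suppose every peel
   pi^i had |LIS_{pi^i}(y)| < M. By Erdos-Szekeres, the symbols of R0 still present in x^i
   number at most l |LDS_pi(x^i)| <= 2 l |pi^i|, while a pi-decreasing sequence is
   pi^i-increasing, so pi^i contains at most l M symbols of R0 (they lie in y). Hence the first
   m peels are each longer than (|R0| - m l M) / (2 l); since every symbol of x' occurs at
   least f times, the peels have total length at most n / f. Taking m = |R0| / (2 l M) gives
   f |R0|^2 <= 8 l^2 M n + 4 f l^2 M^2, which is too small for |R0| >= |L'| / (2 f) when
   |L| = n^(3/4+t), f < n^(1/4), l < n^t / log n and M < n^t / 200. *)

From mathcomp Require Import all_boot zify.
From Stdlib Require Import Reals Lra Psatz.
Set Implicit Arguments. Unset Strict Implicit. Unset Printing Implicit Defensive.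

Section Longest.
Variable T : eqType.
Implicit Types (P : pred (seq T)) (s u v w : seq T).

Definition longest P u : nat :=
  \max_(m : (size u).-tuple bool | P (mask m u)) size (mask m u).

Lemma size_le_longest P u w : subseq w u -> P w -> size w <= longest P u.
Proof.
case/subseqP=> m sm -> Pw; have sm' : size m == size u by apply/eqP.
exact: (leq_bigmax_cond (Tuple sm') Pw).
Qed.

Lemma longest_attained P u : P [::] ->
  exists w, [/\ subseq w u, P w & size w = longest P u].
Proof.
move=> P0.
have nz : 0 < #|[pred m : (size u).-tuple bool | P (mask m u)]|.
  by apply/card_gt0P; exists (nseq_tuple (size u) false); rewrite inE /= mask_false.
have [m Pm Em] := eq_bigmax_cond (fun m : (size u).-tuple bool => size (mask m u)) nz.
by exists (mask m u); rewrite mask_subseq -Em; split=> //; rewrite inE in Pm.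
Qed.

Lemma longest_subseq P u v : P [::] -> subseq u v -> longest P u <= longest P v.
Proof.
move=> P0 suv; have [w [swu Pw <-]] := longest_attained u P0.
exact: size_le_longest (subseq_trans swu suv) Pw.
Qed.

Lemma cons_subseq_drop s a w i : a \in s -> i <= index a s ->
  subseq w (drop (index a s).+1 s) -> subseq (a :: w) (drop i s).
Proof.
move=> sa ia sw; apply: (@subseq_trans _ (drop (index a s) s)).
  by rewrite (drop_nth a) ?index_mem // nth_index //= eqxx.
by rewrite -(subnK ia) -drop_drop drop_subseq.
Qed.

End Longest.

Lemma size_count_partition (T : eqType) (g : T -> nat) K (s : seq T) :
  (forall a, a \in s -> g a < K) ->
  size s = \sum_(v < K) count (fun a => g a == v) s.
Proof.
elim: s => [|a s IH] gK /=; first by rewrite big1.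
rewrite big_split /= -IH; last by move=> c cs; apply: gK; rewrite inE cs orbT.
have ga : g a < K by apply: gK; rewrite inE eqxx.
rewrite (bigD1 (Ordinal ga)) //= eqxx big1 ?addn0 // => v /negbTE nv.
by apply/eqP; rewrite eqb0; apply: contraFN nv => /eqP gv; apply/eqP/val_inj.
Qed.

Section ErdosSzekeres.
Variables (T : eqType) (lt : rel T).
Hypothesis lt_trans : transitive lt.
Variable s : seq T.
Hypothesis s_uniq : uniq s.
Hypothesis lt_total : {in s &, forall a b, a != b -> lt a b || lt b a}.

Let gt := fun a b => lt b a.

Let tail a := longest (sorted lt) (filter (lt a) (drop (index a s).+1 s)).

Lemma tail_lt_longest a : a \in s -> tail a < longest (sorted lt) s.
Proof.
move=> sa; rewrite /tail.
have [w [sw lt_w <-]] :=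
  longest_attained (filter (lt a) (drop (index a s).+1 s)) (isT : sorted lt [::]).
rewrite subseq_filter in sw; case/andP: sw => aw sw.
apply: (@size_le_longest _ _ _ (a :: w)).
  by have := cons_subseq_drop sa (leq0n _) sw; rewrite drop0.
by rewrite /= path_sortedE // lt_w aw.
Qed.

Lemma tail_decr a b : a \in s -> b \in s -> index a s < index b s -> lt a b ->
  tail b < tail a.
Proof.
move=> sa sb iab lab; rewrite {1}/tail.
have [w [sw lt_w <-]] :=
  longest_attained (filter (lt b) (drop (index b s).+1 s)) (isT : sorted lt [::]).
rewrite subseq_filter in sw; case/andP: sw => bw sw.
apply: (@size_le_longest _ _ _ (b :: w)); last by rewrite /= path_sortedE // lt_w bw.
rewrite subseq_filter /= lab (cons_subseq_drop sb iab sw) andbT.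
by apply/allP => c cw; apply: lt_trans lab _; move/allP: bw; apply.
Qed.

Lemma tail_level_decr : pairwise (fun a b => (tail a == tail b) ==> gt a b) s.
Proof.
case Es: s => [|x0 s'] //; rewrite -Es.
apply/(pairwiseP x0) => i j ilt jlt ij; apply/implyP => /eqP Eij.
have si : nth x0 s i \in s by rewrite mem_nth.
have sj : nth x0 s j \in s by rewrite mem_nth.
have [lij|nlij] := boolP (lt (nth x0 s i) (nth x0 s j)).
  by have := tail_decr si sj; rewrite !index_uniq // Eij ltnn => /(_ ij lij).
by have := lt_total si sj; rewrite nth_uniq // (negbTE nlij) (ltn_eqF ij); apply.
Qed.

Theorem erdos_szekeres : size s <= longest (sorted lt) s * longest (sorted gt) s.
Proof.
rewrite (size_count_partition tail_lt_longest).
rewrite -[X in X * _]card_ord -sum_nat_const leq_sum // => v _.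
rewrite -size_filter; apply: size_le_longest; first exact: filter_subseq.
rewrite sorted_pairwise; last by move=> b a c hab hbc; apply: lt_trans hbc hab.
apply: (@sub_in_pairwise _ (fun c => tail c == v) (fun a b => (tail a == tail b) ==> gt a b)).
- by move=> a b /eqP -> /eqP ->; rewrite eqxx.
- by apply/allP => c; rewrite mem_filter => /andP[].
- exact: pairwise_filter tail_level_decr.
Qed.

End ErdosSzekeres.

Section PiOrder.
Variable T : eqType.
Implicit Types (pi p s : seq T).

Lemma lt_pi_irr pi : irreflexive (lt_pi pi).
Proof. by move=> a; rewrite /lt_pi ltnn !andbF. Qed.

Lemma lt_pi_trans pi : transitive (lt_pi pi).
Proof.
move=> b a c /and3P[ha _ hab] /and3P[_ hc hbc].
by rewrite /lt_pi ha hc (ltn_trans hab hbc).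
Qed.

Lemma lt_pi_total pi : {in pi &, forall a b, a != b -> lt_pi pi a b || lt_pi pi b a}.
Proof.
move=> a b ha hb; rewrite /lt_pi ha hb /=.
case: ltngtP => // eq_ab; apply: contraNT => _.
by rewrite -(nth_index a ha) eq_ab nth_index.
Qed.

Lemma gt_pi_trans pi : transitive (fun a b => lt_pi pi b a).
Proof. by move=> b a c hab hbc; apply: lt_pi_trans hbc hab. Qed.

Lemma gt_pi_sorted_uniq pi p : sorted (fun a b => lt_pi pi b a) p -> uniq p.
Proof. by apply: sorted_uniq; [apply: gt_pi_trans | move=> a; apply: lt_pi_irr]. Qed.

Lemma lt_pi_sorted_rev pi p a b : sorted (fun a b => lt_pi pi b a) p ->
  a \in p -> b \in p -> lt_pi pi b a -> lt_pi p a b.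
Proof.
move=> sp ha hb lba; rewrite /lt_pi ha hb /=.
have /(pairwiseP a) pw : pairwise (fun a b => lt_pi pi b a) p.
  by rewrite -sorted_pairwise //; apply: gt_pi_trans.
case: ltngtP => // [iba | iab].
  have := pw _ _ _ _ iba; rewrite !inE !index_mem !nth_index // => /(_ hb ha) lab.
  by have := lt_pi_trans lab lba; rewrite lt_pi_irr.
by move: lba; rewrite -(nth_index a ha) iab nth_index ?lt_pi_irr.
Qed.

Lemma lis_lenE pi s : {subset s <= pi} -> lis_len pi s = longest (sorted (lt_pi pi)) s.
Proof. by move=> s_pi; rewrite /lis_len /Project (all_filterP _) //; apply/allP. Qed.

Lemma erdos_szekeres_pi pi s : uniq s -> {subset s <= pi} ->
  size s <= lis_len pi s * longest (sorted (fun a b => lt_pi pi b a)) s.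
Proof.
move=> us s_pi; rewrite lis_lenE //.
apply: (erdos_szekeres (@lt_pi_trans pi) us) => a b ha hb.
by apply: lt_pi_total; apply: s_pi.
Qed.

End PiOrder.

Section Frequencies.
Variable T : eqType.
Implicit Types (x s L R : seq T).

Lemma count_mem_filter (S : pred T) a s : S a -> count_mem a (filter S s) = count_mem a s.
Proof.
by move=> Sa; rewrite count_filter; apply: eq_count => b /=; case: eqP => // ->; rewrite Sa.
Qed.

Lemma Project_sigma_cc_count f g x a : a \in Project x (sigma_cc f g x) ->
  f <= count_mem a (Project x (sigma_cc f g x)).
Proof. by rewrite mem_filter => /andP[S_a _]; rewrite count_mem_filter //; case/andP: S_a. Qed.

Lemma Project_sigma_co_subseq f g n L x : subseq L x -> size x <= n ->
  {subset Project L (sigma_co f g L) <= Project x (sigma_cc f n x)}.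
Proof.
move=> Lx x_n a; rewrite !mem_filter => /andP[/andP[f_a _] aL].
rewrite (mem_subseq Lx aL) andbT /sigma_cc (leq_trans f_a (leq_count_subseq _ Lx)).
exact: leq_trans (count_size _ _) x_n.
Qed.

Lemma size_le_mul_distinct K s R : uniq R -> R =i s ->
  (forall a, a \in s -> count_mem a s <= K) -> size s <= K * size R.
Proof.
move=> R_uniq R_s s_K.
have -> : size R = size (undup s).
  by apply/perm_size/uniq_perm; rewrite ?undup_uniq // => a; rewrite mem_undup R_s.
rewrite -(perm_size (perm_count_undup s)) size_flatten /shape -map_comp.
have : {subset undup s <= s} by move=> a; rewrite mem_undup.
elim: (undup s) => [|a u IH] /= u_s; first by rewrite muln0.
rewrite size_nseq mulnS leq_add //; first by apply/s_K/u_s/mem_head.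
by apply: IH => b bu; apply: u_s; rewrite inE bu orbT.
Qed.

Lemma size_Project_sigma_co f g L R : uniq R -> R =i Project L (sigma_co f g L) ->
  size (Project L (sigma_co f g L)) <= g * size R.
Proof.
move=> R_uniq R_L; apply: size_le_mul_distinct R_uniq R_L _ => a.
rewrite mem_filter => /andP[S_a _]; rewrite count_mem_filter //.
by case/andP: S_a => _; apply: ltnW.
Qed.

End Frequencies.

Lemma quadratic_tradeoff r b c :
  (forall m, m * (r - m * b) <= c) -> r * r <= 4 * b * c + 4 * b * b.
Proof.
move=> H; have [b0|b_gt0] := posnP b; first by have := H c.+1; rewrite b0; nia.
have e_lt : r %% (2 * b) < 2 * b by rewrite ltn_pmod // muln_gt0.
have := H (r %/ (2 * b)); have Er := divn_eq r (2 * b).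
move: (r %/ (2 * b)) (r %% (2 * b)) e_lt Er => m e e_lt ->.
nia.
Qed.

Section Peeling.
Variable T : eqType.
Implicit Types (pi p s xj R : seq T) (pis : seq (seq T)).

Lemma leq_mul_size_count f p s : uniq p -> (forall a, a \in p -> f <= count_mem a s) ->
  f * size p <= count (mem p) s.
Proof.
elim: p => [|a p IH] /=; first by rewrite muln0.
case/andP => a_p up f_ap; rewrite mulnS.
have -> : count (mem (a :: p)) s = count_mem a s + count (mem p) s.
  rewrite -count_predUI (@eq_count _ (predI _ _) pred0) ?count_pred0 ?addn0.
    by apply: eq_count => b; rewrite /= in_cons.
  by move=> b /=; case: eqP => // ->; rewrite (negbTE a_p).
rewrite leq_add ?f_ap ?mem_head // IH // => b bp.
by apply: f_ap; rewrite inE bp orbT.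
Qed.

(* A peel deletes every occurrence of its symbols, and each occurs at least [f] times. *)
Lemma peel_total_size pi f xj pis : peel_run pi xj pis ->
  (forall a, a \in xj -> f <= count_mem a xj) -> f * sumn (map size pis) <= size xj.
Proof.
elim: pis xj => [|p pis IH] xj /=; first by rewrite muln0.
case=> _ p_xj sp _ run f_xj; rewrite mulnDr -(count_predC (mem p) xj) leq_add //.
  apply: leq_mul_size_count (gt_pi_sorted_uniq sp) _ => a ap.
  exact: f_xj (mem_subseq p_xj ap).
rewrite -size_filter; apply: IH run _ => a; rewrite mem_filter => /andP[a_p a_xj].
by rewrite count_mem_filter //; apply: f_xj.
Qed.

Variables (pi y R0 : seq T) (M : nat).
Hypotheses (R0_pi : {subset R0 <= pi}) (R0_uniq : uniq R0) (R0_y : subseq R0 y).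
Let l := lis_len pi R0.

Lemma lis_len_R0_subseq R : subseq R R0 -> lis_len pi R <= l.
Proof.
move=> RR0; have R_pi : {subset R <= pi} by move=> a /(mem_subseq RR0)/R0_pi.
by rewrite /l !lis_lenE //; apply: longest_subseq.
Qed.

Lemma size_le_lis_lds xj R : subseq R xj -> subseq R R0 -> size R <= l * lds_len pi xj.
Proof.
move=> Rx RR0; have R_pi : {subset R <= pi} by move=> a /(mem_subseq RR0)/R0_pi.
apply: leq_trans (erdos_szekeres_pi (subseq_uniq RR0 R0_uniq) R_pi) _.
rewrite leq_mul ?lis_len_R0_subseq // longest_subseq // subseq_filter Rx andbT.
exact/allP.
Qed.

Lemma count_peel_le R p : subseq R R0 -> sorted (fun a b => lt_pi pi b a) p ->
  count (mem p) R <= l * lis_len p y.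
Proof.
move=> RR0 sp; set Rp := filter (mem p) R.
have RpR0 : subseq Rp R0 := subseq_trans (filter_subseq _ _) RR0.
have Rp_pi : {subset Rp <= pi} by move=> a /(mem_subseq RpR0)/R0_pi.
rewrite -size_filter; apply: leq_trans (erdos_szekeres_pi (subseq_uniq RpR0 R0_uniq) Rp_pi) _.
rewrite leq_mul ?lis_len_R0_subseq //.
have [w [wRp sw <-]] := longest_attained Rp (isT : sorted (fun a b => lt_pi pi b a) [::]).
have w_p : all (mem p) w by apply/allP => a /(mem_subseq wRp); rewrite mem_filter => /andP[].
apply: size_le_longest.
  by rewrite subseq_filter w_p (subseq_trans wRp (subseq_trans RpR0 R0_y)).
by apply: (sub_in_sorted _ w_p sw) => a b ha hb; apply: lt_pi_sorted_rev.
Qed.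

(* As long as fewer than [m] peels have happened, at most [m * l * M] symbols of [R] are
   gone, so each of the first [m] peels has length at least [(size R - m * l * M) / (2 l)]. *)
Lemma peel_removal pis xj R : peel_run pi xj pis -> subseq R xj -> subseq R R0 ->
  (forall p, p \in pis -> lis_len p y <= M) ->
  forall m, m * (size R - m * (l * M)) <= 2 * l * sumn (map size pis).
Proof.
elim: pis xj R => [|p pis IH] xj R /=.
  by move=> -> ; rewrite subseq0 => /eqP -> _ _ m; rewrite sub0n muln0.
case=> _ _ sp lds_p run Rx RR0 M_pis [|m]; first by rewrite mul0n.
set R' := filter (predC (mem p)) R.
have R'x : subseq R' (Exclude xj (mem p)).
  by rewrite subseq_filter filter_all (subseq_trans (filter_subseq _ _) Rx).
have IHm := IH _ _ run R'x (subseq_trans (filter_subseq _ _) RR0)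
  (fun q qp => M_pis q (mem_behead (s := p :: pis) qp)) m.
have p_R : count (mem p) R <= l * M.
  by apply: leq_trans (count_peel_le RR0 sp) _; rewrite leq_mul2l M_pis ?mem_head ?orbT.
rewrite mulSn mulnDr leq_add //.
  apply: leq_trans (leq_subr _ _) (leq_trans (size_le_lis_lds Rx RR0) _).
  by rewrite [2 * l]mulnC -mulnA leq_mul2l lds_p orbT.
have size_R' : size R' = size R - count (mem p) R.
  by rewrite size_filter -(count_predC (mem p) R) addKn.
apply: leq_trans IHm; rewrite leq_mul2l size_R' mulSn subnDA.
by rewrite leq_sub2r ?leq_sub2l ?orbT.
Qed.

Lemma peel_nat_bound f x0 pis : peel_run pi x0 pis -> subseq R0 x0 ->
  (forall a, a \in x0 -> f <= count_mem a x0) -> (forall p, p \in pis -> lis_len p y <= M) ->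
  f * (size R0 * size R0) <= 8 * (l * M) * l * size x0 + 4 * f * (l * M) * (l * M).
Proof.
move=> run R0x f_x0 M_pis; have f_sum := peel_total_size run f_x0.
have := quadratic_tradeoff (peel_removal run R0x (subseq_refl R0) M_pis).
set S := sumn _ => /(leq_mul (leqnn f)) /leq_trans; apply.
rewrite mulnDr leq_add //; last by rewrite !mulnA (mulnC f).
have -> : f * (4 * (l * M) * (2 * l * S)) = 8 * (l * M) * l * (f * S) by nia.
by rewrite leq_mul2l f_sum orbT.
Qed.

End Peeling.

Section RealBounds.
Local Open Scope R_scope.

Lemma peel_terms_small (q u f A M : R) :
  1 <= u <= q -> 0 <= f < q -> 0 <= A < u -> 0 <= M -> 200 * M < u ->
  16 * (8 * f * A ^ 2 * M * q ^ 4 + 4 * f ^ 2 * A ^ 2 * M ^ 2) < q ^ 6 * u ^ 2.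
Proof.
move=> u_bds f_bds A_bds M0 M_ub.
have A2 : A ^ 2 <= u ^ 2 by apply: pow_incr; lra.
have A2_0 : 0 <= A ^ 2 by apply: pow2_ge_0.
have q4_0 : 0 <= q ^ 4 by apply: pow_le; lra.
have u2_q4 : u ^ 2 <= q ^ 4.
  have : u ^ 2 <= q ^ 2 by apply: pow_incr; lra.
  have : q ^ 2 <= q ^ 4 by apply: Rle_pow; [lra | lia].
  lra.
have T1 : 8 * f * A ^ 2 * M * q ^ 4 <= q ^ 6 * u ^ 2 / 25.
  have fA2M : f * A ^ 2 * (200 * M) <= q * u ^ 2 * u.
    apply: Rmult_le_compat; try lra; first by apply: Rmult_le_pos; lra.
    by apply: Rmult_le_compat; lra.
  have : q * u ^ 2 * u * q ^ 4 <= q * u ^ 2 * q * q ^ 4.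
    by apply: Rmult_le_compat_r q4_0 _; apply: Rmult_le_compat_l; nra.
  nra.
have T2 : 4 * f ^ 2 * A ^ 2 * M ^ 2 <= q ^ 6 * u ^ 2 / 10000.
  have fA2 : f ^ 2 * A ^ 2 <= q ^ 2 * u ^ 2.
    by apply: Rmult_le_compat => //; try apply: pow2_ge_0; apply: pow_incr; lra.
  have fA2M2 : f ^ 2 * A ^ 2 * (200 * M) ^ 2 <= q ^ 2 * u ^ 2 * u ^ 2.
    apply: Rmult_le_compat => //; last by apply: pow_incr; lra.
      by apply: Rmult_le_pos; apply: pow2_ge_0.
    exact: pow2_ge_0.
  have : q ^ 2 * u ^ 2 * u ^ 2 <= q ^ 2 * u ^ 2 * q ^ 4.
    by apply: Rmult_le_compat_l => //; apply: Rmult_le_pos; apply: pow2_ge_0.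
  lra.
have : 0 < q ^ 6 * u ^ 2 by apply: Rmult_lt_0_compat; apply: pow_lt; lra.
lra.
Qed.

Lemma peel_square_bound (q u lg f r l M L' : R) :
  0 <= q -> 0 <= u -> 1 <= lg -> 0 <= f ->
  q ^ 3 * u / (2 * lg) <= L' -> L' <= 2 * f * r ->
  f * (r * r) <= 8 * (l * M) * l * q ^ 4 + 4 * f * (l * M) * (l * M) ->
  (q ^ 3 * u) ^ 2 <= 16 * (8 * f * (l * lg) ^ 2 * M * q ^ 4 + 4 * f ^ 2 * (l * lg) ^ 2 * M ^ 2).
Proof.
move=> q0 u0 lg1 f0 L'_lb L'_ub key.
have P_le : q ^ 3 * u <= 4 * (f * r * lg).
  have := Rmult_le_compat_r (2 * lg) _ _ ltac:(lra) (Rle_trans _ _ _ L'_lb L'_ub).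
  by rewrite /Rdiv Rmult_assoc Rinv_l; nra.
have P0 : 0 <= q ^ 3 * u by apply: Rmult_le_pos => //; apply: pow_le.
have : (f * r * lg) ^ 2 <= f * lg ^ 2 * (8 * (l * M) * l * q ^ 4 + 4 * f * (l * M) * (l * M)).
  by have := Rmult_le_compat_l (f * lg ^ 2) _ _ ltac:(nra) key; lra.
nra.
Qed.

Lemma Rpower_ge1 x a : 1 <= x -> 0 <= a -> 1 <= Rpower x a.
Proof. by move=> x1 a0; rewrite -(Rpower_O x); [apply: Rle_Rpower | lra]. Qed.

Lemma log2R_ge1 x : 2 <= x -> 1 <= log2R x.
Proof.
move=> x2; have ln2 := ln_lt_2.
have : ln 2 <= ln x.
  by case: (Rle_lt_or_eq_dec _ _ x2) => [lt2x | <-]; [apply/Rlt_le/ln_increasing; lra | lra].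
move=> ln_x; apply: (Rmult_le_reg_r (ln 2)); first lra.
by rewrite /log2R /Rdiv Rmult_assoc Rinv_l; lra.
Qed.

Lemma peel_bound_absurd (n f r l M L' : nat) (t : R) :
  (2 <= n)%nat -> 0 < t <= 1/4 ->
  Rpower (INR n) (3/4 + t) / (2 * log2R (INR n)) <= INR L' -> (L' <= 2 * f * r)%nat ->
  INR l < Rpower (INR n) t / log2R (INR n) -> INR M < Rpower (INR n) t / 200 ->
  INR f < Rpower (INR n) (1/4) ->
  (f * (r * r) <= 8 * (l * M) * l * n + 4 * f * (l * M) * (l * M))%nat -> False.
Proof.
move=> n2 t_bds L'_lb /leP/le_INR L'_ub l_ub M_ub f_ub /leP/le_INR key.
rewrite -!multE -!plusE !plus_INR !mult_INR /= in L'_ub key.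
have N2 : 2 <= INR n by rewrite -[2]/(INR 2); apply/le_INR/leP.
set N := INR n in N2 L'_lb l_ub M_ub f_ub key.
have lg1 := log2R_ge1 N2.
set q := Rpower N (1/4) in f_ub; set u := Rpower N t in l_ub M_ub.
have q_pos : 0 < q by apply: exp_pos.
have N_q4 : N = q ^ 4.
  rewrite -Rpower_pow // Rpower_mult.
  have -> : 1/4 * INR 4 = 1 by rewrite /=; lra.
  by rewrite Rpower_1 //; lra.
have L_q3u : Rpower N (3/4 + t) = q ^ 3 * u.
  rewrite -Rpower_pow // Rpower_mult -Rpower_plus.
  by have -> : 1/4 * INR 3 = 3/4 by rewrite /=; lra.
have u1 : 1 <= u by apply: Rpower_ge1; lra.
have u_q : u <= q by apply: Rle_Rpower; lra.
have l_lg : INR l * log2R N < u.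
  have := Rmult_lt_compat_r (log2R N) _ _ ltac:(lra) l_ub.
  by rewrite /Rdiv Rmult_assoc Rinv_l; lra.
have A0 : 0 <= INR l * log2R N by apply: Rmult_le_pos; [apply: pos_INR | lra].
have := peel_terms_small (conj u1 u_q) (conj (pos_INR f) f_ub) (conj A0 l_lg)
  (pos_INR M) ltac:(lra).
rewrite L_q3u in L'_lb; rewrite N_q4 in key.
have := peel_square_bound (r := INR r) (l := INR l) (M := INR M) (Rlt_le _ _ q_pos)
  (ltac:(lra) : 0 <= u) lg1 (pos_INR f) L'_lb ltac:(lra) ltac:(lra).
lra.
Qed.

End RealBounds.

Lemma bigmax_lt_or_witness (I : eqType) (s : seq I) (F : I -> nat) (c : R) : (0 < c)%R ->
  (INR (\max_(i <- s) F i) < c)%R \/ exists2 i, i \in s & (INR (F i) >= c)%R.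
Proof.
move=> c_pos; rewrite big_seq.
apply: (big_ind (fun v => INR v < c \/ exists2 i, i \in s & INR (F i) >= c)%R) => [|a b|i si].
- by left.
- by rewrite /maxn; case: ltnP.
- by case: (Rlt_or_le (INR (F i)) c) => [|F_c]; [left | right; exists i => //; lra].
Qed.

Theorem mainTheorem6 (T : eqType) (x y : seq T) (t : R) (L : seq T) (f : nat)
  (pi R0 : seq T) :
  let n := (size x + size y)%N in
  (2 <= n)%N ->
  (0 < t <= 1/4)%R ->
  is_lcs L x y ->
  INR (size L) = Rpower (INR n) (3/4 + t) ->
  (exists k : nat, f = 2 ^ k)%N ->
  (1 <= f)%N ->
  (INR f < Rpower (INR n) (1/4))%R ->
  let L' := Project L (sigma_co f (2 * f) L) in
  (INR (size L') >= INR (size L) / (2 * log2R (INR n)))%R ->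
  let x' := Project x (sigma_cc f n x) in
  uniq pi -> (forall a, (a \in pi) = (a \in x')) ->
  subseq R0 L' -> uniq R0 -> (forall a, (a \in R0) = (a \in L')) ->
  (INR (lis_len pi R0) < Rpower (INR n) t / log2R (INR n))%R ->
  forall pis : seq (seq T), peel_run pi x' pis ->
  exists2 p, p \in pis & (INR (lis_len p y) >= Rpower (INR n) t / 200)%R.
Proof.
move=> n n2 t_bds [Lx Ly _] L_size _ _ f_ub L' L'_size x' _ pi_x'.
move=> R0L' R0_uniq R0_L' lis_R0 pis run.
have x'_n : size x' <= n := leq_trans (size_subseq (filter_subseq _ _)) (leq_addr _ _).
have L'_x' : {subset L' <= x'} :=
  Project_sigma_co_subseq (f := f) (g := 2 * f) Lx (leq_addr _ _).
have R0L : subseq R0 L := subseq_trans R0L' (filter_subseq _ _).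
have R0_x' : subseq R0 x'.
  rewrite subseq_filter (subseq_trans R0L Lx) andbT; apply/allP => a.
  by rewrite R0_L' => /L'_x'; rewrite mem_filter => /andP[].
have R0_pi : {subset R0 <= pi} by move=> a; rewrite R0_L' pi_x' => /L'_x'.
have u_pos : (0 < Rpower (INR n) t / 200)%R by apply: Rdiv_lt_0_compat; [apply: exp_pos | lra].
have [M_ub|//] := bigmax_lt_or_witness pis (fun p => lis_len p y) u_pos.
exfalso; apply: (peel_bound_absurd n2 t_bds _ (size_Project_sigma_co R0_uniq R0_L') lis_R0 M_ub
  f_ub).
  by rewrite -L_size; apply: Rge_le.
apply: leq_trans (peel_nat_bound R0_pi R0_uniq (subseq_trans R0L Ly) run R0_x'
  (@Project_sigma_cc_count _ _ _ _) (fun p pp => leq_bigmax_seq _ pp isT)) _.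
by rewrite leq_add2r leq_mul2l x'_n orbT.
Qed.
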